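(* Consider SALIQUOT. Then $\mathcal{SG}(0)=0$. Suppose that $n>0$ and let $n=2^{k}m$, where $2\nmid m$ and $k\ge 0$. Then $\mathcal{SG}(n)= v(n)+1=k+1$.
   Context: SALIQUOT is the impartial normal-play game on the nonnegative integers where from $n$ a player subtracts a positive divisor of $n$, i.e. $\mathrm{opt}(n)=\{n-d: d\mid n,\ d>0\}$ (so $0$ has no options); the player unable to move loses. $\mathcal{SG}$ denotes the Sprague-Grundy value, defined by the mex rule. $v(n)$ is the 2-adic valuation of $n$. *)

From mathcomp Require Import all_boot.

Set Implicit Arguments. Unset Strict Implicit. Unset Printing Implicit Defensive.

Definition saliquot_opts (n : nat) : seq nat :=
  [seq n - d | d <- iota 1 n & d %| n].

Definition mex (s : seq nat) : nat := find (fun i => i \notin s) (iota 0 (size s).+1).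

(* Sprague-Grundy value, by recursion with fuel (all options of n are < n
   when n > 0, and 0 has no options, so fuel n.+1 suffices) *)
Fixpoint sg_fuel (fuel n : nat) : nat :=
  match fuel with
  | 0 => 0
  | f.+1 => mex [seq sg_fuel f m | m <- saliquot_opts n]
  end.

Definition SG (n : nat) : nat := sg_fuel n.+1 n.

Definition v2 (n : nat) : nat := logn 2 n.

(* The options of n = 2^k a (a odd) realise every 2-adic valuation j < k, via
   n - 2^j a, and never realise valuation k: subtracting a divisor of
   valuation < k lowers the valuation below k, and subtracting 2^k b with b | a
   leaves 2^k (a - b) with a - b even.  Since 0 = n - n is also an option, by
   strong induction the options of n have SG values exactly 0, 1, ..., k (and
   possibly values above k + 1), so SG n = k + 1. *)
From mathcomp Require Import all_boot.

Set Implicit Arguments.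
Unset Strict Implicit.

Lemma find_iota0_eq (p : pred nat) N x :
  x < N -> p x -> (forall i, i < x -> ~~ p i) -> find p (iota 0 N) = x.
Proof.
move=> xN px below_x.
have has_p : has p (iota 0 N) by apply/hasP; exists x => //; rewrite mem_iota.
have find_lt := has_p; rewrite has_find size_iota in find_lt.
have := nth_find 0 has_p; rewrite nth_iota // add0n => p_find.
case: (ltngtP (find p (iota 0 N)) x) => // lt_find.
- by move: (below_x _ lt_find); rewrite p_find.
- by move: (before_find 0 lt_find); rewrite nth_iota ?add0n ?px // (ltn_trans lt_find).
Qed.

Lemma mex_eq s x : (forall i, i < x -> i \in s) -> x \notin s -> mex s = x.
Proof.
move=> below_x x_notin; apply: find_iota0_eq => //.
- rewrite ltnS -(size_iota 0 x); apply: uniq_leq_size; first exact: iota_uniq.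
  by move=> i; rewrite mem_iota add0n => /below_x.
- by move=> i /below_x ->.
Qed.

Lemma saliquot_optsP n m :
  reflect (exists2 d, [&& 0 < d, d <= n & d %| n] & m = n - d)
          (m \in saliquot_opts n).
Proof.
apply: (iffP mapP) => -[d].
- rewrite mem_filter mem_iota add1n ltnS => /and3P [d_dvd d_gt0 d_le] ->.
  by exists d; rewrite ?d_gt0 ?d_le ?d_dvd.
- move=> /and3P [d_gt0 d_le d_dvd] ->.
  by exists d; rewrite // mem_filter mem_iota add1n ltnS d_gt0 d_le d_dvd.
Qed.

Lemma saliquot_opt_lt n m : m \in saliquot_opts n -> m < n.
Proof.
case/saliquot_optsP => d /and3P [d_gt0 d_le _] ->.
by rewrite ltn_subrL d_gt0 (leq_trans d_gt0).
Qed.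

Lemma saliquot_opt0 n : 0 < n -> 0 \in saliquot_opts n.
Proof. by move=> n_gt0; apply/saliquot_optsP; exists n; rewrite ?subnn ?n_gt0 ?leqnn ?dvdnn. Qed.

Lemma sg_fuel_irrelevant f f' n :
  n < f -> n < f' -> sg_fuel f n = sg_fuel f' n.
Proof.
elim: f f' n => [|f IH] [|f'] n //= n_lt_f n_lt_f'.
congr mex; apply/eq_in_map => m /saliquot_opt_lt m_lt_n.
by apply: IH; apply: leq_trans m_lt_n _.
Qed.

Lemma SG_rec n : SG n = mex [seq SG m | m <- saliquot_opts n].
Proof.
rewrite {1}/SG /=; congr mex; apply/eq_in_map => m /saliquot_opt_lt m_lt_n.
by apply: sg_fuel_irrelevant.
Qed.

Lemma logn2_pfactor_odd k a : odd a -> logn 2 (2 ^ k * a) = k.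
Proof.
move=> odd_a; have a_gt0 : 0 < a by case: a odd_a.
by rewrite lognM ?expn_gt0 // pfactorK // logn_coprime ?addn0 ?coprime2n.
Qed.

Lemma odd_part_decomp n : 0 < n -> exists2 a, odd a & n = 2 ^ logn 2 n * a.
Proof.
move=> n_gt0; have [a coprime_2a n_eq] := pfactor_coprime (isT : prime 2) n_gt0.
by exists a; [rewrite -coprime2n | rewrite mulnC].
Qed.

Lemma saliquot_opt_logn_neq k a m :
  odd a -> m \in saliquot_opts (2 ^ k * a) -> 0 < m -> logn 2 m != k.
Proof.
move=> odd_a /saliquot_optsP [d /and3P [d_gt0 d_le d_dvd] ->] m_gt0.
set n := 2 ^ k * a in d_le d_dvd m_gt0 *.
have pk_dvd_n : 2 ^ k %| n by apply: dvdn_mulr.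
have [pk_dvd_d | pk_ndvd_d] := boolP (2 ^ k %| d); last first.
  have : ~~ (2 ^ k %| n - d) by rewrite dvdn_subr.
  by rewrite pfactor_dvdn // -ltnNge => /ltn_eqF ->.
have [b d_eq] : exists b, d = 2 ^ k * b by exists (d %/ 2 ^ k); rewrite mulnC divnK.
rewrite {}d_eq /n -mulnBr in d_dvd d_le m_gt0 *.
have b_dvd_a : b %| a by rewrite dvdn_pmul2l ?expn_gt0 in d_dvd.
have odd_b : odd b by apply: contraTT odd_a; rewrite -!dvdn2 => /dvdn_trans; apply.
have b_le_a : b <= a by rewrite leq_pmul2l ?expn_gt0 in d_le.
have even_ab : 2 %| a - b by rewrite dvdn2 oddB // odd_a odd_b.
have : 2 ^ k.+1 %| 2 ^ k * (a - b) by rewrite expnSr dvdn_pmul2l ?expn_gt0.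
by rewrite pfactor_dvdn // => /gtn_eqF ->.
Qed.

Lemma saliquot_opt_logn k a j : odd a -> j < k ->
  exists2 m, m \in saliquot_opts (2 ^ k * a) & 0 < m /\ logn 2 m = j.
Proof.
move=> odd_a j_lt_k; have a_gt0 : 0 < a by case: a odd_a.
have pk_eq : 2 ^ k = 2 ^ j * 2 ^ (k - j) by rewrite -expnD subnKC // ltnW.
exists (2 ^ k * a - 2 ^ j * a).
  apply/saliquot_optsP; exists (2 ^ j * a) => //.
  have j_le_k := ltnW j_lt_k.
  by rewrite muln_gt0 expn_gt0 a_gt0 leq_pmul2r // leq_pexp2l // dvdn_pmul2r // dvdn_exp2l.
have m_eq : 2 ^ k * a - 2 ^ j * a = 2 ^ j * ((2 ^ (k - j) - 1) * a).
  by rewrite pk_eq mulnBl mul1n mulnBr !mulnA.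
have odd_factor_gt0 : 0 < 2 ^ (k - j) - 1.
  by rewrite subn_gt0 -{1}(expn0 2) ltn_exp2l // subn_gt0.
rewrite m_eq; split; first by rewrite !muln_gt0 expn_gt0 odd_factor_gt0 a_gt0.
apply: logn2_pfactor_odd; rewrite oddM odd_a andbT oddB ?expn_gt0 // oddX /=.
by rewrite orbF subn_eq0 leqNgt j_lt_k.
Qed.

Lemma SG_pos n : 0 < n -> SG n = (logn 2 n).+1.
Proof.
elim/ltn_ind: n => n IH n_gt0; rewrite SG_rec.
have [a odd_a] := odd_part_decomp n_gt0; move: (logn 2 n) => k n_eq.
have SG_opt m : m \in saliquot_opts n -> SG m = if m == 0 then 0 else (logn 2 m).+1.
  by case: posnP => [->|m_gt0] // /saliquot_opt_lt /IH ->.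
rewrite n_eq in SG_opt *; apply: mex_eq => [[|i] i_lt_k|]; apply/mapP.
- by exists 0; rewrite // saliquot_opt0 -?n_eq.
- have [m m_opt [m_gt0 logn_m]] := saliquot_opt_logn odd_a (i_lt_k : i < k).
  by exists m; rewrite // SG_opt // eqn0Ngt m_gt0 logn_m.
- case=> m m_opt; rewrite SG_opt //; case: posnP => // m_gt0 [logn_m].
  by move: (saliquot_opt_logn_neq odd_a m_opt m_gt0); rewrite -logn_m eqxx.
Qed.

Theorem mainTheorem2 :
  SG 0 = 0 /\
  (forall n k m : nat, 0 < n -> ~~ (2 %| m) -> n = 2 ^ k * m ->
     SG n = v2 n + 1 /\ SG n = k + 1).
Proof.
split=> // n k m n_gt0 m_odd n_eq.
rewrite dvdn2 negbK in m_odd.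
by rewrite SG_pos // /v2 !addn1 n_eq logn2_pfactor_odd.
Qed.
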